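(* Let $\mathsf N>1$, $p\in(2,6)$, $\theta\in(\vartheta(p,3),1)$ and $\beta=1-\frac{p-2}{2p\theta}$. Then the equation $\theta(6-p)\big(x^\beta-\mathsf N\big)x-\big(2p\theta-3(p-2)\big)\Big(\theta\big(x^\beta-\mathsf N\big)+(1-\theta)(x-1)\mathsf N\Big)=0$ has a unique root in the interval $(\mathsf N^{1/\beta},\infty)$.
   Context: $\vartheta(p,3)=\frac{3(p-2)}{2p}$. *)

From Stdlib Require Import Reals.
Open Scope R_scope.

Definition vartheta3 (p : R) : R := 3 * (p - 2) / (2 * p).

Definition beta (p theta : R) : R := 1 - (p - 2) / (2 * p * theta).

Definition F (N p theta x : R) : R :=
  theta * (6 - p) * (Rpower x (beta p theta) - N) * x
  - (2 * p * theta - 3 * (p - 2)) *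
    (theta * (Rpower x (beta p theta) - N) + (1 - theta) * (x - 1) * N).

From Stdlib Require Import Reals Lra.
From Coquelicot Require Import Coquelicot.
Open Scope R_scope.

(* With [b = beta p theta], [a = theta (6 - p)], [c = 2 p theta - 3 (p - 2)] and
   [K = (a + c (1 - theta)) N] one has the identity
     F x = x^b (a x - c theta) - K x + c N.
   Since [0 < b < 1] and [a, c > 0], F' is nondecreasing on (0, oo), i.e. F is convex.
   At [x0 = N^(1/b)] we get [F x0 = c N (1 - theta) (1 - x0) < 0], and F is positive
   for large x, so the intermediate value theorem gives a root beyond x0.  A convex
   function that is negative at x0 vanishes at most once to the right of x0. *)

Lemma continuity_pt_of_is_derive (f : R -> R) (x l : R) :
  is_derive f x l -> continuity_pt f x.
Proof.
  intros Hf. apply derivable_continuous_pt. exists l. now apply is_derive_Reals.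
Qed.

Section ConvexRootUnique.

Variables (f df : R -> R) (a : R).
Hypothesis f_derive : forall x, a <= x -> is_derive f x (df x).
Hypothesis df_nondecreasing : forall x y, a <= x <= y -> df x <= df y.

Lemma MVT_right_of (u v : R) :
  a <= u < v -> exists c, u <= c <= v /\ f v - f u = df c * (v - u).
Proof.
  intros Huv.
  destruct (MVT_gen f u v df) as [c [Hc E]].
  - intros y Hy. apply f_derive. rewrite Rmin_left in Hy by lra. lra.
  - intros y Hy. apply (continuity_pt_of_is_derive f y (df y)), f_derive.
    rewrite Rmin_left in Hy by lra. lra.
  - rewrite Rmin_left, Rmax_right in Hc by lra. now exists c.
Qed.

Lemma no_two_roots_right_of_negative (u v : R) :
  f a < 0 -> a < u < v -> f u = 0 -> f v = 0 -> False.
Proof.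
  intros Ha Huv Fu Fv.
  destruct (MVT_right_of a u) as [c1 [Hc1 E1]]; [lra|].
  destruct (MVT_right_of u v) as [c2 [Hc2 E2]]; [lra|].
  (* f rises on [a, u] but is flat on [u, v], against the monotonicity of df. *)
  assert (Dc1 : 0 < df c1).
  { destruct (Rle_or_lt (df c1) 0) as [H|H]; [|exact H].
    assert (df c1 * (u - a) <= 0) by (apply Rmult_le_0_r; lra). lra. }
  assert (Dc2 : df c2 = 0).
  { assert (Z : df c2 * (v - u) = 0) by lra.
    apply Rmult_integral in Z. destruct Z; lra. }
  assert (df c1 <= df c2) by (apply df_nondecreasing; lra).
  lra.
Qed.

Lemma root_unique_right_of_negative (u v : R) :
  f a < 0 -> a < u -> a < v -> f u = 0 -> f v = 0 -> u = v.
Proof.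
  intros Ha Hu Hv Fu Fv.
  destruct (Rtotal_order u v) as [H|[H|H]]; [exfalso|exact H|exfalso].
  - exact (no_two_roots_right_of_negative u v Ha (conj Hu H) Fu Fv).
  - exact (no_two_roots_right_of_negative v u Ha (conj Hv H) Fv Fu).
Qed.

End ConvexRootUnique.

Lemma Rpower_is_derive (b x : R) :
  0 < x -> is_derive (fun y => Rpower y b) x (b * Rpower x (b - 1)).
Proof. intros Hx. apply is_derive_Reals. now apply derivable_pt_lim_power. Qed.

Lemma Rpower_pred_mul (x b : R) : 0 < x -> Rpower x (b - 1) * x = Rpower x b.
Proof.
  intros Hx. rewrite <- (Rpower_1 x) at 2 by exact Hx.
  rewrite <- Rpower_plus. f_equal. ring.
Qed.

Lemma Rpower_inv_exponent (y b : R) : 0 < y -> b <> 0 -> Rpower (Rpower y (1 / b)) b = y.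
Proof.
  intros Hy Hb. rewrite Rpower_mult. replace (1 / b * b) with 1 by (field; exact Hb).
  now apply Rpower_1.
Qed.

Definition dF (N p th x : R) : R :=
  th * (6 - p) * (beta p th + 1) * Rpower x (beta p th) - th * (6 - p) * N
  - (2 * p * th - 3 * (p - 2)) * (th * beta p th * Rpower x (beta p th - 1) + (1 - th) * N).

Lemma F_is_derive (N p th x : R) : 0 < x -> is_derive (F N p th) x (dF N p th x).
Proof.
  intros Hx. unfold F, dF.
  assert (Hb := Rpower_is_derive (beta p th) x Hx).
  auto_derive.
  - repeat split; now exists (beta p th * Rpower x (beta p th - 1)).
  - replace (Derive (fun y => Rpower y (beta p th)) x)
      with (beta p th * Rpower x (beta p th - 1)) by (symmetry; now apply is_derive_unique).
    rewrite <- (Rpower_pred_mul x (beta p th)) by exact Hx.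
    ring.
Qed.

Lemma F_alt (N p th x : R) :
  F N p th x =
  Rpower x (beta p th) * (th * (6 - p) * x - (2 * p * th - 3 * (p - 2)) * th)
  - (th * (6 - p) + (2 * p * th - 3 * (p - 2)) * (1 - th)) * N * x
  + (2 * p * th - 3 * (p - 2)) * N.
Proof. unfold F. ring. Qed.

Section AdmissibleParameters.

Variables N p th : R.
Hypothesis N_gt1 : 1 < N.
Hypothesis p_range : 2 < p < 6.
Hypothesis th_range : vartheta3 p < th < 1.

Lemma coef_pos : 0 < 2 * p * th - 3 * (p - 2).
Proof.
  unfold vartheta3 in th_range.
  assert (E : 3 * (p - 2) / (2 * p) * (2 * p) = 3 * (p - 2)) by (field; lra).
  nra.
Qed.

Lemma th_pos : 0 < th.
Proof. assert (H := coef_pos). nra. Qed.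

Lemma beta_range : 0 < beta p th < 1.
Proof.
  assert (Hth := th_pos). assert (Hc := coef_pos). unfold beta.
  assert (E : (p - 2) / (2 * p * th) * (2 * p * th) = p - 2) by (field; lra).
  assert (0 < (p - 2) / (2 * p * th)) by (apply Rdiv_lt_0_compat; nra).
  nra.
Qed.

Lemma dF_nondecreasing (u v : R) : 0 < u <= v -> dF N p th u <= dF N p th v.
Proof.
  intros Huv.
  assert (Hth := th_pos). assert (Hc := coef_pos). assert (Hb := beta_range).
  unfold dF.
  set (b := beta p th) in *. set (c := 2 * p * th - 3 * (p - 2)) in *.
  (* x^b increases while x^(b-1) decreases, as 0 < b < 1 *)
  assert (H1 : Rpower u b <= Rpower v b) by (apply Rle_Rpower_l; lra).
  assert (H2 : Rpower v (b - 1) <= Rpower u (b - 1)).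
  { replace (b - 1) with (- (1 - b)) by ring. rewrite !Rpower_Ropp.
    apply Rinv_le_contravar; [unfold Rpower; apply exp_pos|].
    apply Rle_Rpower_l; lra. }
  assert (0 < th * (6 - p) * (b + 1)) by (repeat apply Rmult_lt_0_compat; lra).
  assert (0 < c * th * b) by (repeat apply Rmult_lt_0_compat; lra).
  nra.
Qed.

Lemma F_neg_at_threshold : F N p th (Rpower N (1 / beta p th)) < 0.
Proof.
  assert (Hth := th_pos). assert (Hc := coef_pos). assert (Hb := beta_range).
  set (x0 := Rpower N (1 / beta p th)).
  assert (Hx0 : 1 < x0).
  { assert (H0 : Rpower N 0 < x0) by (apply Rpower_lt; [lra|apply Rdiv_lt_0_compat; lra]).
    now rewrite Rpower_O in H0 by lra. }
  rewrite F_alt. unfold x0 at 1. rewrite Rpower_inv_exponent by lra. fold x0.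
  assert (0 < (2 * p * th - 3 * (p - 2)) * N * (1 - th) * (x0 - 1))
    by (repeat apply Rmult_lt_0_compat; lra).
  nra.
Qed.

Lemma F_pos_eventually (x0 : R) : exists M, x0 < M /\ 0 < F N p th M.
Proof.
  assert (Hth := th_pos). assert (Hc := coef_pos). assert (Hb := beta_range).
  set (b := beta p th) in *. set (a := th * (6 - p)).
  set (c := 2 * p * th - 3 * (p - 2)) in *.
  set (K := (a + c * (1 - th)) * N).
  assert (Ha : 0 < a) by (apply Rmult_lt_0_compat; lra).
  assert (HK : 0 < K).
  { assert (0 < c * (1 - th)) by (apply Rmult_lt_0_compat; lra).
    apply Rmult_lt_0_compat; lra. }
  (* M is large enough that a M >= 2 c th and a M^b >= 2 K *)
  set (M := Rmax x0 0 + 2 * c * th / a + Rpower (2 * K / a) (1 / b) + 1).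
  assert (Hcth : 0 <= 2 * c * th / a).
  { apply Rlt_le, Rdiv_lt_0_compat; [|exact Ha]. apply Rmult_lt_0_compat; lra. }
  assert (Hr : 0 < Rpower (2 * K / a) (1 / b)) by (unfold Rpower; apply exp_pos).
  assert (Hmax := Rmax_l x0 0). assert (Hmax0 := Rmax_r x0 0).
  exists M. split; [unfold M; lra|].
  assert (HaM : 2 * c * th <= a * M).
  { assert (E : 2 * c * th / a * a = 2 * c * th) by (field; lra). unfold M. nra. }
  assert (HMb : 2 * K / a <= Rpower M b).
  { rewrite <- (Rpower_inv_exponent (2 * K / a) b) by (try apply Rdiv_lt_0_compat; lra).
    apply Rle_Rpower_l; [lra|]. unfold M; lra. }
  assert (E : 2 * K / a * a = 2 * K) by (field; lra).
  rewrite F_alt. fold b a c. fold K.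
  set (P := Rpower M b) in *.
  assert (HP : 0 < P) by (unfold P, Rpower; apply exp_pos).
  assert (HPa : 2 * K <= P * a) by (rewrite <- E; apply Rmult_le_compat_r; lra).
  assert (Hlead : K * M <= P * (a * M - c * th)).
  { assert (HM0 : 0 < M) by (unfold M; lra).
    assert (0 <= (P * a - 2 * K) * M) by (apply Rmult_le_pos; lra).
    apply Rle_trans with (P * (a * M / 2)); [nra|].
    apply Rmult_le_compat_l; lra. }
  assert (0 < c * N) by (apply Rmult_lt_0_compat; lra).
  lra.
Qed.

End AdmissibleParameters.

Theorem lemma2 (N p theta : R) :
  1 < N -> 2 < p < 6 -> vartheta3 p < theta < 1 ->
  exists! x : R, Rpower N (1 / beta p theta) < x /\ F N p theta x = 0.
Proof.
  intros HN Hp Hth.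
  set (x0 := Rpower N (1 / beta p theta)).
  assert (Hx0 : 0 < x0) by (unfold x0, Rpower; apply exp_pos).
  assert (Fx0 := F_neg_at_threshold N p theta HN Hp Hth). fold x0 in Fx0.
  destruct (F_pos_eventually N p theta HN Hp Hth x0) as [M [HM FM]].
  destruct (Ranalysis5.IVT_interv (F N p theta) x0 M) as [z [Hz Fz]]; try assumption.
  { intros y Hy. apply (continuity_pt_of_is_derive _ _ _ (F_is_derive N p theta y ltac:(lra))). }
  assert (Hzx : x0 < z) by (destruct (Req_dec z x0) as [->|]; lra).
  exists z. split; [split; assumption|].
  intros w [Hw Fw].
  apply (root_unique_right_of_negative (F N p theta) (dF N p theta) x0); try assumption.
  - intros x Hx. apply F_is_derive. lra.
  - intros x y Hxy. apply (dF_nondecreasing N p theta Hp Hth). lra.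
Qed.
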